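(* Let $\mathcal{X}$ be a finite alphabet and let $P_0,P_1$ be probability mass functions on $\mathcal{X}$ with the same support $\mathcal{X}$. Let $n>1$, let $k^\star\in(1,n]$ be an integer, and let $\mathcal{D}=(x_1,\dots,x_n)$ be a random dataset with independent entries such that $x_1,\dots,x_{k^\star-1}\sim P_0$ and $x_{k^\star},\dots,x_n\sim P_1$. Consider the estimator $$\hat k\in\arg\max_{k\in[n]} l(\mathcal{D},k),\qquad l(\mathcal{D},k)=\sum_{i=k}^{n}\log\frac{P_1(x_i)}{P_0(x_i)}.$$ Let $s=D^{J}_{\infty}(P_0,P_1)=\max_{x\in\mathcal{X}}\log\frac{P_1(x)}{P_0(x)}-\min_{x\in\mathcal{X}}\log\frac{P_1(x)}{P_0(x)}$ and $C=\min\{D_{\mathrm{KL}}(P_0\|P_1),D_{\mathrm{KL}}(P_1\|P_0)\}$. Then for every $\alpha\in[n]$, the estimator is $(\alpha,\beta)$-accurate with $$\beta\le 2\min\Bigg\{\sum_{i=1}^{i^*}\exp\Big(\frac{-2^{i-1}\alpha C^2}{s^2}\Big);\ \exp\big(-\alpha I_{ch}(P_0,P_1)\big)\Bigg\},$$ where $i^*=\lceil\log_2\big(\frac{n-1}{\alpha}\big)\rceil$; that is, $\mathbb{P}\{\hat k\notin[k^\star-\alpha,k^\star+\alpha]\}$ is at most the right-hand side.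
   Context: $[a]=\{1,\dots,a\}$. All logarithms are natural. An estimator $\hat k$ of the change-point $k^\star$ is $(\alpha,\beta)$-accurate if $\mathbb{P}\{\hat k\notin[k^\star-\alpha,k^\star+\alpha]\}=\beta$. Chernoff information: $I_{ch}(P_0,P_1)=-\min_{\lambda\in(0,1)}\log\big(\sum_{x}P_0(x)^\lambda P_1(x)^{1-\lambda}\big)$. $D_\infty(P\|Q)=\log\max_x \frac{P(x)}{Q(x)}$ and $D^J_\infty(P,Q)=D_\infty(P\|Q)+D_\infty(Q\|P)$. *)

From HB Require Import structures.
From mathcomp Require Import all_boot all_order all_algebra.
From mathcomp Require Import all_classical all_reals all_analysis.
Set Implicit Arguments. Unset Strict Implicit. Unset Printing Implicit Defensive.
Import Order.TTheory GRing.Theory Num.Theory.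
Local Open Scope ring_scope.
Local Open Scope classical_set_scope.

Section Defs.
Variables (R : realType) (X : finType).

Definition KL (P Q : X -> R) : R := \sum_(x : X) P x * ln (P x / Q x).

(* D_oo(P || Q) = log max_x P(x)/Q(x)  (ratios are positive, so 0 is a
   neutral start for the max). *)
Definition Dinf (P Q : X -> R) : R := ln (\big[Num.max/0]_(x : X) (P x / Q x)).

Definition DJinf (P Q : X -> R) : R := Dinf P Q + Dinf Q P.

(* Chernoff information: - min_{lam in (0,1)} log sum_x P0^lam P1^(1-lam),
   written as the sup of the negated quantity (the min is attained). *)
Definition chernoff_info (P0 P1 : X -> R) : R :=
  sup [set - ln (\sum_(x : X) (P0 x `^ lam) * (P1 x `^ (1 - lam))) | lam in `]0, 1[].

(* Log-likelihood statistic l(D,k) = sum_{i=k}^n log(P1(x_i)/P0(x_i)),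
   with data D : 'I_n -> X, entry i : 'I_n being x_{i+1}. *)
Definition llr (P0 P1 : X -> R) (n : nat) (D : {ffun 'I_n -> X}) (k : nat) : R :=
  \sum_(i < n | (k <= i.+1)%N) ln (P1 (D i) / P0 (D i)).

Definition data_prob (P0 P1 : X -> R) (n kstar : nat) (D : {ffun 'I_n -> X}) : R :=
  \prod_(i < n) (if (i.+1 < kstar)%N then P0 (D i) else P1 (D i)).

Definition prob_event (P0 P1 : X -> R) (n kstar : nat) (E : pred {ffun 'I_n -> X}) : R :=
  \sum_(D in E) data_prob P0 P1 kstar D.

End Defs.

From HB Require Import structures.
From mathcomp Require Import all_boot all_order all_algebra.
From mathcomp Require Import all_classical all_reals all_analysis.
From mathcomp Require Import lra ring zify.
Set Implicit Arguments. Unset Strict Implicit. Unset Printing Implicit Defensive.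
Import Order.TTheory GRing.Theory Num.Theory.
Local Open Scope ring_scope.

(* Let Y = ln (P1 / P0). If khat > k* + alpha, the increments Y(x_i) on the window
   [k*, khat), all drawn from P1, have nonpositive sum since khat maximises l(D, .).
   So for t >= 0 the product over that window of the mean-one factors
   exp(-t Y(x_i)) / rho, with rho = E_P1 exp(-t Y) <= 1, is at least rho^-(alpha+1).
   The partial products form a nonnegative martingale, and Ville's maximal inequality
   bounds the probability of the event by rho^(alpha+1); the left tail is the mirror
   image under reversal of the data, with P0 and exp(t Y). For t = lam on the right and
   t = 1 - lam on the left both values of rho equal sum_x P0^lam P1^(1-lam), whence the
   Chernoff bound; for t chosen by Hoeffding's lemma, rho <= exp(-2 KL^2 / s^2), already
   below the first term of the dyadic sum, so no peeling over scales is needed. *)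

(** * Real inequalities *)

Section RealCalculus.
Variable R : realType.

Lemma is_derive_ge0_le (f df : R -> R) (a b : R) :
  (forall x : R, is_derive x 1 f (df x)) -> a <= b ->
  (forall x, a < x < b -> 0 <= df x) -> f a <= f b.
Proof.
move=> fdf ab df_ge0.
have fder x : derivable f x 1 by apply: ex_derive.
apply: (@ger0_derive1_le_cc R f a b) => //; rewrite ?in_itv /= ?lexx ?ab //.
- by move=> x xab; rewrite derive1E derive_val; apply: df_ge0.
- by apply: derivable_within_continuous => x _.
Qed.

Lemma is_derive_sign_ge0 (f df : R -> R) :
  (forall x : R, is_derive x 1 f (df x)) -> f 0 = 0 ->
  (forall x, 0 < x -> 0 <= df x) -> (forall x, x < 0 -> df x <= 0) ->
  forall x, 0 <= f x.
Proof.
move=> fdf f0 df_pos df_neg x; have [x_ge0|x_lt0] := leP 0 x.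
  rewrite -f0; apply: is_derive_ge0_le x_ge0 _ => // y /andP[y0 _].
  exact: df_pos.
suff : - f x <= - f 0 by rewrite f0 oppr0 oppr_le0.
apply: (@is_derive_ge0_le (fun y => - f y) (fun y => - df y) x 0 _ (ltW x_lt0)).
  by move=> y /andP[_ y0]; rewrite oppr_ge0 df_neg.
Qed.

Lemma expR_convex (l u v : R) : 0 <= l <= 1 ->
  expR (l * u + (1 - l) * v) <= l * expR u + (1 - l) * expR v.
Proof. by case/andP=> l0 l1; have := convex_expR (Itv01 l0 l1) u v; rewrite !convRE. Qed.

Lemma expR_le_chord (a b t y : R) : a <= y <= b -> a < b ->
  expR (t * y) <= ((b - y) * expR (t * a) + (y - a) * expR (t * b)) / (b - a).
Proof.
move=> /andP[ay yb] ab; have ba_neq0 : b - a != 0 by rewrite subr_eq0 gt_eqF.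
have l01 : 0 <= (b - y) / (b - a) <= 1.
  by rewrite divr_ge0 ?subr_ge0 ?ler_pdivrMr ?subr_gt0 ?mul1r ?lerD2l ?lerN2 // ltW.
have := expR_convex (t * a) (t * b) l01.
by congr (expR _ <= _); field.
Qed.

Lemma weighted_amgm (a b l : R) : 0 < a -> 0 < b -> 0 <= l <= 1 ->
  a `^ l * b `^ (1 - l) <= l * a + (1 - l) * b.
Proof.
move=> a_gt0 b_gt0 l01; rewrite /powR !gt_eqF // -expRD.
by have := expR_convex (ln a) (ln b) l01; rewrite !lnK ?posrE // mulrC [_ * ln b]mulrC.
Qed.

Lemma le_expRN_sup (S : set R) (a L : R) : (S !=set0)%classic -> 0 < a ->
  (forall e, S e -> L <= expR (- (a * e))) -> L <= expR (- (a * sup S)).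
Proof.
move=> S0 a_gt0 L_le; have [L_le0|L_gt0] := leP L 0.
  exact: le_trans L_le0 (expR_ge0 _).
have ub : ubound S (- ln L / a).
  move=> e Se; rewrite ler_pdivlMr // mulrC -lerNr -ler_expR lnK ?posrE //.
  exact: L_le.
rewrite -[leLHS]lnK ?posrE // ler_expR lerNr -ler_pdivlMl // mulrC.
exact: ge_sup S0 ub.
Qed.

End RealCalculus.

Section HoeffdingBernoulli.
Variables (R : realType) (p : R).
Hypothesis p01 : 0 <= p <= 1.

Let mgf (h : R) := 1 - p + p * expR h.
Let gap (h : R) := p * h + h ^+ 2 / 8 - ln (mgf h).
Let gap' (h : R) := p + h / 4 - p * expR h / mgf h.

Let mgf_gt0 h : 0 < mgf h.
Proof.
case/andP: p01 => p0 p1; rewrite /mgf.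
have := mulr_ge0 p0 (ltW (expR_gt0 h)).
have [->|p_lt1] := eqVneq p 1; first by rewrite subrr add0r mul1r expR_gt0.
have : p < 1 by rewrite lt_neqAle p_lt1 p1.
lra.
Qed.

Let is_derive_mgf (x : R) : is_derive x 1 mgf (p * expR x).
Proof.
have -> : mgf = cst (1 - p) + cst p * expR by apply/funext.
by apply: is_derive_eq; rewrite /= /GRing.scale /= add0r mulr0 addr0.
Qed.

Let is_derive_gap' (x : R) :
  is_derive x 1 gap' (4^-1 - p * expR x * (1 - p) / mgf x ^+ 2).
Proof.
have mgf_neq0 := lt0r_neq0 (mgf_gt0 x).
have mgfV := is_deriveV mgf_neq0 (is_derive_mgf x).
have -> : gap' = cst p + id * cst 4^-1 - cst p * expR * (fun h => (mgf h)^-1).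
  by apply/funext.
by apply: is_derive_eq; rewrite /= /GRing.scale mulrfctE /= /mgf; field.
Qed.

Let is_derive_gap (x : R) : is_derive x 1 gap (gap' x).
Proof.
have mgf_ln := is_derive1_comp (is_derive1_ln (mgf_gt0 x)) (is_derive_mgf x).
have -> : gap = cst p * id + id ^+ 2 * cst 8^-1 - (@ln R \o mgf).
  by apply/funext => h; rewrite /gap /= expr2.
have mgf_neq0 := lt0r_neq0 (mgf_gt0 x).
by apply: is_derive_eq; rewrite /= /GRing.scale /= expr1 /gap' /mgf; field.
Qed.

Let gap''_ge0 x : 0 <= 4^-1 - p * expR x * (1 - p) / mgf x ^+ 2.
Proof.
have mgf2_gt0 : 0 < mgf x ^+ 2 by rewrite exprn_gt0.
rewrite subr_ge0 ler_pdivrMr // -subr_ge0.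
have -> : 4^-1 * mgf x ^+ 2 - p * expR x * (1 - p) = (1 - p - p * expR x) ^+ 2 / 4.
  by rewrite /mgf; field.
by rewrite divr_ge0 // sqr_ge0.
Qed.

Let gap'0 : gap' 0 = 0.
Proof. by rewrite /gap' /mgf expR0 mul0r addr0 mulr1 subrK divr1 subrr. Qed.

(* [gap] and [gap'] vanish at 0, and [gap'' = 1/4 - q (1 - q) >= 0] for
   [q = p e^h / mgf h]. *)
Lemma hoeffding_bernoulli h : 1 - p + p * expR h <= expR (p * h + h ^+ 2 / 8).
Proof.
suff : 0 <= gap h by rewrite subr_ge0 -ler_expR lnK // posrE.
apply: (is_derive_sign_ge0 is_derive_gap) => [|y y_gt0|y y_lt0].
- by rewrite /gap /mgf expR0 mulr0 expr0n /= mul0r addr0 mulr1 subrK ln1 subrr.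
- rewrite -gap'0; apply: (is_derive_ge0_le is_derive_gap') (ltW y_gt0) _ => z _.
  exact: gap''_ge0.
- rewrite -gap'0; apply: (is_derive_ge0_le is_derive_gap') (ltW y_lt0) _ => z _.
  exact: gap''_ge0.
Qed.

End HoeffdingBernoulli.

Section Hoeffding.
Variables (R : realType) (X : finType) (Q : X -> R).
Hypotheses (Q_ge0 : forall x, 0 <= Q x) (Q_sum1 : \sum_x Q x = 1).

Lemma mean_in_range (f : X -> R) (a b : R) : (forall x, a <= f x <= b) ->
  a <= \sum_x Q x * f x <= b.
Proof.
move=> fab; rewrite -[a]mulr1 -[b]mulr1 -Q_sum1 !mulr_sumr.
by apply/andP; split; apply: ler_sum => x _; rewrite [Q x * _]mulrC ler_wpM2r //;
  case/andP: (fab x).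
Qed.

Lemma hoeffding_mgf (f : X -> R) (a b t : R) : (forall x, a <= f x <= b) -> a < b ->
  \sum_x Q x * expR (t * f x) <= expR (t * (\sum_x Q x * f x) + t ^+ 2 * (b - a) ^+ 2 / 8).
Proof.
move=> fab ab; have ba_neq0 : b - a != 0 by rewrite subr_eq0 gt_eqF.
set mu := \sum_x Q x * f x; set p := (mu - a) / (b - a).
have p01 : 0 <= p <= 1.
  have /andP[amu mub] := mean_in_range fab.
  by rewrite divr_ge0 ?subr_ge0 ?ler_pdivrMr ?subr_gt0 ?mul1r ?lerD2r // ltW.
set ea := expR (t * a); set eb := expR (t * b).
have chord_mean : \sum_x Q x * (((b - f x) * ea + (f x - a) * eb) / (b - a)) =
    ea * (1 - p + p * expR (t * (b - a))).
  transitivity (\sum_x ((b * ea - a * eb) / (b - a) * Q x + (eb - ea) / (b - a) * (Q x * f x))).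
    by apply: eq_bigr => x _; field.
  rewrite big_split /= -!mulr_sumr Q_sum1 -/mu /p.
  have -> : eb = ea * expR (t * (b - a)) by rewrite /ea /eb -expRD; congr expR; ring.
  by field.
apply: (le_trans (ler_sum _ (fun x _ => ler_wpM2l (Q_ge0 x) (expR_le_chord t (fab x) ab)))).
rewrite chord_mean.
have -> : t * mu + t ^+ 2 * (b - a) ^+ 2 / 8 = t * a + (p * (t * (b - a)) + (t * (b - a)) ^+ 2 / 8).
  by rewrite /p; field.
by rewrite expRD ler_pM2l ?expR_gt0 // hoeffding_bernoulli.
Qed.

Lemma hoeffding_mgf_opt (f : X -> R) (a b mu : R) :
  (forall x, a <= f x <= b) -> \sum_x Q x * f x = - mu ->
  \sum_x Q x * expR (4 * mu / (b - a) ^+ 2 * f x) <= expR (- (2 * mu ^+ 2) / (b - a) ^+ 2).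
Proof.
move=> fab mean_f; have [ba0|ba_neq0] := eqVneq (b - a) 0.
  (* Division by 0 makes both the tilt and the exponent 0. *)
  rewrite ba0 expr0n /= !invr0 !mulr0 expR0.
  by under eq_bigr do rewrite mul0r expR0 mulr1; rewrite Q_sum1.
have ab : a < b.
  have /andP[a_le b_ge] := mean_in_range fab.
  by rewrite lt_neqAle (le_trans a_le b_ge) andbT eq_sym -subr_eq0.
apply: (le_trans (hoeffding_mgf _ fab ab)); rewrite mean_f.
by rewrite ler_expR [leLHS](_ : _ = - (2 * mu ^+ 2) / (b - a) ^+ 2) //; field.
Qed.

End Hoeffding.

Lemma KL_ge0 (R : realType) (X : finType) (P Q : X -> R) :
  (forall x, 0 < P x) -> (forall x, 0 < Q x) -> \sum_x P x = 1 -> \sum_x Q x = 1 ->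
  0 <= KL P Q.
Proof.
move=> P_gt0 Q_gt0 P_sum1 Q_sum1.
rewrite -(subrr 1) -{1}P_sum1 -Q_sum1 -sumrB /KL; apply: ler_sum => x _.
have ln_le := @le_ln1Dx R (Q x / P x - 1); rewrite addrCA subrr addr0 in ln_le.
rewrite -[ln _]opprK -lnV ?posrE ?divr_gt0 // invf_div mulrN.
have ratio_gt : -1 < Q x / P x - 1 by have := divr_gt0 (Q_gt0 x) (P_gt0 x); lra.
have := ler_wpM2l (ltW (P_gt0 x)) (ln_le ratio_gt).
by rewrite mulrBr mulrCA divff ?gt_eqF // mulr1; lra.
Qed.

(** * Product measures and Ville's inequality *)

Lemma prodr_window_const (R : comPzRingType) (c : R) n a b : (b <= n)%N ->
  \prod_(i < n | (a <= i < b)%N) c = c ^+ (b - a).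
Proof.
move=> bn; rewrite -prodr_const_nat (big_nat_widen _ _ _ _ _ bn) big_geq_mkord.
by apply: eq_bigl => i; rewrite andbC.
Qed.

Section ProductProbability.
Variables (R : realType) (X : finType).

Definition prod_prob n (w : 'I_n -> X -> R) (E : pred {ffun 'I_n -> X}) : R :=
  \sum_(D in E) \prod_i w i (D i).

Definition ffun_cons n (x : X) (D : {ffun 'I_n -> X}) : {ffun 'I_n.+1 -> X} :=
  [ffun i => if unlift ord0 i is Some j then D j else x].

Definition ffun_rev n (D : {ffun 'I_n -> X}) : {ffun 'I_n -> X} :=
  [ffun i => D (rev_ord i)].

Lemma ffun_cons0 n x (D : {ffun 'I_n -> X}) : ffun_cons x D ord0 = x.
Proof. by rewrite ffunE unlift_none. Qed.

Lemma ffun_cons_lift n x (D : {ffun 'I_n -> X}) j : ffun_cons x D (lift ord0 j) = D j.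
Proof. by rewrite ffunE liftK. Qed.

Lemma ffun_revK n : involutive (@ffun_rev n).
Proof. by move=> D; apply/ffunP => i; rewrite !ffunE rev_ordK. Qed.

Section Weights.
Variables (n : nat) (w : 'I_n -> X -> R).
Hypotheses (w_ge0 : forall i x, 0 <= w i x) (w_sum1 : forall i, \sum_x w i x = 1).

Lemma prod_prob_le1 E : prod_prob w E <= 1.
Proof.
have <- : \prod_(i < n) \sum_x w i x = 1 by apply: big1 => i _.
rewrite bigA_distr_bigA /=.
by rewrite [leRHS](bigID (mem E)) /= lerDl; apply: sumr_ge0 => D _; apply: prodr_ge0.
Qed.

Lemma prod_prob_union (E E1 E2 : pred {ffun 'I_n -> X}) :
  (forall D, E D -> E1 D || E2 D) -> prod_prob w E <= prod_prob w E1 + prod_prob w E2.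
Proof.
move=> E_sub; rewrite /prod_prob !(big_mkcond (fun D => D \in _)) -big_split; apply: ler_sum => D _ /=.
have D_ge0 : 0 <= \prod_i w i (D i) by apply: prodr_ge0.
case: ifP => [/E_sub/orP[] E_D | _]; last by rewrite addr_ge0 //; case: ifP.
  by rewrite (_ : D \in E1 = true) // lerDl; case: ifP.
by rewrite (_ : D \in E2 = true) // lerDr; case: ifP.
Qed.

End Weights.

Lemma ffun_cons_bij n : bijective (fun p : X * {ffun 'I_n -> X} => ffun_cons p.1 p.2).
Proof.
exists (fun D : {ffun 'I_n.+1 -> X} => (D ord0, [ffun j => D (lift ord0 j)])).
  by case=> x D /=; rewrite ffun_cons0; congr pair; apply/ffunP => j; rewrite ffunE ffun_cons_lift.
move=> D; apply/ffunP => i; rewrite ffunE.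
by case: unliftP => [j ->|->]; rewrite ?ffunE.
Qed.

Lemma prod_prob_cons n (w : 'I_n.+1 -> X -> R) E :
  prod_prob w E =
  \sum_x w ord0 x * prod_prob (fun j => w (lift ord0 j)) [pred D | E (ffun_cons x D)].
Proof.
rewrite /prod_prob big_mkcond (reindex _ (onW_bij _ (ffun_cons_bij n))) /=.
under [RHS]eq_bigr do rewrite mulr_sumr big_mkcond.
rewrite pair_big /=; apply: eq_bigr => -[x D] _ /=.
rewrite big_ord_recl ffun_cons0 inE.
rewrite (eq_bigr (fun i => w (lift ord0 i) (D i))) => [|i _]; last by rewrite ffun_cons_lift.
by case: ifP; rewrite ?mulr0.
Qed.

Lemma prod_prob_rev n (w : 'I_n -> X -> R) E :
  prod_prob w E = prod_prob (fun i => w (rev_ord i)) [pred D | E (ffun_rev D)].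
Proof.
rewrite /prod_prob (reindex_inj (can_inj (@ffun_revK n))) /=.
apply: eq_big => D; first by rewrite inE.
by move=> _; rewrite (reindex_inj rev_ord_inj); apply: eq_bigr => i _; rewrite ffunE rev_ordK.
Qed.

Lemma ville n (w g : 'I_n -> X -> R) (y c : R) (E : pred {ffun 'I_n -> X}) :
  (forall i x, 0 <= w i x) -> (forall i, \sum_x w i x = 1) ->
  (forall i x, 0 <= g i x) -> (forall i, \sum_x w i x * g i x <= 1) ->
  0 < c -> 0 <= y ->
  (forall D, E D -> exists2 m, (m <= n)%N & c <= y * \prod_(i < n | (i < m)%N) g i (D i)) ->
  prod_prob w E <= y / c.
Proof.
elim: n => [|n IHn] in w g y E *;
  move=> w_ge0 w_sum1 g_ge0 g_mean c_gt0 y_ge0 E_hit;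
  (have [c_le_y|y_lt_c] := leP c y;
   first by apply: le_trans (prod_prob_le1 w_ge0 w_sum1 E) _; rewrite ler_pdivlMr // mul1r).
  rewrite /prod_prob big_pred0 => [|D]; first by rewrite divr_ge0 // ltW.
  apply/negP => /E_hit[m _]; rewrite big_ord0 mulr1.
  by apply/negP; rewrite -ltNge.
(* Conditioning on the first coordinate x turns the capital y into y * g ord0 x. *)
rewrite prod_prob_cons.
apply: (@le_trans _ _ (\sum_x w ord0 x * (y * g ord0 x / c))).
  apply: ler_sum => x _; rewrite ler_wpM2l //.
  apply: (IHn _ (fun j => g (lift ord0 j))) => //; first by rewrite mulr_ge0.
  move=> D /E_hit[[|m] m_le].
    by rewrite big_pred0 // mulr1 => c_le_y; move: y_lt_c; rewrite ltNge c_le_y.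
  have -> : \prod_(i < n.+1 | (i < m.+1)%N) g i (ffun_cons x D i) =
      g ord0 x * \prod_(j < n | (j < m)%N) g (lift ord0 j) (D j).
    rewrite big_mkcond big_ord_recl ffun_cons0 [in RHS]big_mkcond; congr (_ * _).
    by apply: eq_bigr => j _; rewrite ffun_cons_lift.
  by rewrite mulrA; exists m.
have -> : \sum_x w ord0 x * (y * g ord0 x / c) = y / c * \sum_x w ord0 x * g ord0 x.
  by rewrite mulr_sumr; apply: eq_bigr => x _; ring.
by rewrite ler_piMr // divr_ge0 // ltW.
Qed.

Lemma pmf_mean_gt0 (Q h : X -> R) : (forall x, 0 <= Q x) -> \sum_x Q x = 1 ->
  (forall x, 0 < h x) -> 0 < \sum_x Q x * h x.
Proof.
move=> Q_ge0 Q_sum1 h_gt0.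
have Qh_ge0 x : 0 <= Q x * h x by rewrite mulr_ge0 // ltW.
rewrite lt_def sumr_ge0 // andbT; apply/eqP => /(psumr_eq0P (fun x _ => Qh_ge0 x)) Qh0.
move: Q_sum1; rewrite big1 => [/eqP|x _]; first by rewrite eq_sym oner_eq0.
by have := Qh0 x isT; move/eqP; rewrite mulf_eq0 (gt_eqF (h_gt0 x)) orbF => /eqP.
Qed.

Section Window.
Variables (Q f : X -> R).
Hypotheses (Q_ge0 : forall x, 0 <= Q x) (Q_sum1 : \sum_x Q x = 1).
Let rho := \sum_x Q x * expR (f x).
Hypothesis rho_le1 : rho <= 1.

Lemma prob_window_from n (w : 'I_n -> X -> R) (a k : nat) (E : pred {ffun 'I_n -> X}) :
  (forall i x, 0 <= w i x) -> (forall i, \sum_x w i x = 1) ->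
  (forall (i : 'I_n) x, (a <= i)%N -> w i x = Q x) ->
  (forall D, E D -> exists2 b, (a + k <= b <= n)%N & 0 <= \sum_(i < n | (a <= i < b)%N) f (D i)) ->
  prod_prob w E <= rho ^+ k.
Proof.
move=> w_ge0 w_sum1 w_tail E_window.
have rho_gt0 : 0 < rho by apply: pmf_mean_gt0 => // x; apply: expR_gt0.
pose g i x := if (a <= i)%N then expR (f x) / rho else 1.
have -> : rho ^+ k = 1 / (rho ^+ k)^-1 by rewrite div1r invrK.
apply: (ville (g := g)) => // [i x|i||D /E_window[b /andP[akb bn] sum_ge0]].
- by rewrite /g; case: ifP => // _; rewrite divr_ge0 ?expR_ge0 ?ltW.
- rewrite /g; have [a_le_i|i_lt_a] := leqP a i.
    under eq_bigr => x _ do rewrite w_tail // mulrA.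
    by rewrite -mulr_suml divff ?gt_eqF.
  by under eq_bigr => x _ do rewrite mulr1; rewrite w_sum1.
- by rewrite invr_gt0 exprn_gt0.
exists b => //; rewrite mul1r.
have -> : \prod_(i < n | (i < b)%N) g i (D i) = \prod_(i < n | (a <= i < b)%N) (expR (f (D i)) / rho).
  rewrite big_mkcond [RHS]big_mkcond; apply: eq_bigr => i _; rewrite /g.
  by case: (ltnP i b) => ib; case: (leqP a i) => ai.
rewrite big_split /= -expR_sum prodr_window_const // -exprVn.
apply: (@le_trans _ _ (rho^-1 ^+ (b - a))).
  by rewrite ler_weXn2l ?invf_ge1 //; lia.
by apply: ler_peMl; [rewrite exprn_ge0 // invr_ge0 ltW | rewrite -expR0 ler_expR].
Qed.

Lemma prob_window_to n (w : 'I_n -> X -> R) (b k : nat) (E : pred {ffun 'I_n -> X}) :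
  (forall i x, 0 <= w i x) -> (forall i, \sum_x w i x = 1) -> (b <= n)%N ->
  (forall (i : 'I_n) x, (i < b)%N -> w i x = Q x) ->
  (forall D, E D -> exists2 a, (a + k <= b)%N & 0 <= \sum_(i < n | (a <= i < b)%N) f (D i)) ->
  prod_prob w E <= rho ^+ k.
Proof.
(* Reversing the coordinates maps windows ending at b to windows starting at n - b. *)
move=> w_ge0 w_sum1 bn w_head E_window; rewrite prod_prob_rev.
apply: (prob_window_from (a := (n - b)%N)) => // [i x ni|D /E_window[a akb sum_ge0]].
  by rewrite w_head //= subnSK //; lia.
exists (n - a)%N; first by apply/andP; split; lia.
move: sum_ge0; rewrite (reindex_inj rev_ord_inj) /=.
congr (_ <= _); apply: eq_big => [j|j _]; last by rewrite ffunE rev_ordK.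
by move: (ltn_ord j) => jn; apply/idP/idP => /andP[? ?]; apply/andP; split; lia.
Qed.

End Window.

End ProductProbability.

(** * The change-point estimator *)

Section ChangePoint.
Variables (R : realType) (X : finType) (P0 P1 : X -> R).
Hypotheses (P0_gt0 : forall x, 0 < P0 x) (P1_gt0 : forall x, 0 < P1 x).
Hypotheses (P0_sum1 : \sum_x P0 x = 1) (P1_sum1 : \sum_x P1 x = 1).

Definition loglr (x : X) : R := ln (P1 x / P0 x).

Lemma loglr_range x : - Dinf P0 P1 <= loglr x <= Dinf P1 P0.
Proof.
have ratio_gt0 (P Q : X -> R) : (forall x, 0 < P x) -> (forall x, 0 < Q x) ->
    0 < P x / Q x <= \big[Num.max/0]_y (P y / Q y).
  move=> P_gt0 Q_gt0; rewrite divr_gt0 //=; exact: le_bigmax.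
have /andP[r01 r01_le] := ratio_gt0 _ _ P0_gt0 P1_gt0.
have /andP[r10 r10_le] := ratio_gt0 _ _ P1_gt0 P0_gt0.
rewrite lerNl -lnV ?posrE // invf_div /Dinf !ler_ln ?posrE ?r01_le ?r10_le //.
  exact: lt_le_trans r10_le.
exact: lt_le_trans r01_le.
Qed.

Lemma mean_loglr0 : \sum_x P0 x * loglr x = - KL P0 P1.
Proof.
rewrite /KL -sumrN; apply: eq_bigr => x _.
by rewrite /loglr -mulrN -lnV ?posrE ?divr_gt0 // invf_div.
Qed.

Lemma mean_loglr1 : \sum_x P1 x * - loglr x = - KL P1 P0.
Proof. by rewrite /KL -sumrN; apply: eq_bigr => x _; rewrite mulrN. Qed.

Lemma hoeffding_loglr0 :
  \sum_x P0 x * expR (4 * KL P0 P1 / DJinf P0 P1 ^+ 2 * loglr x)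
  <= expR (- (2 * KL P0 P1 ^+ 2) / DJinf P0 P1 ^+ 2).
Proof.
have P0_ge0 x : 0 <= P0 x by apply: ltW.
have := hoeffding_mgf_opt P0_ge0 P0_sum1 loglr_range mean_loglr0.
by rewrite (_ : Dinf P1 P0 - - Dinf P0 P1 = DJinf P0 P1) // /DJinf; ring.
Qed.

Lemma hoeffding_loglr1 :
  \sum_x P1 x * expR (4 * KL P1 P0 / DJinf P0 P1 ^+ 2 * - loglr x)
  <= expR (- (2 * KL P1 P0 ^+ 2) / DJinf P0 P1 ^+ 2).
Proof.
have P1_ge0 x : 0 <= P1 x by apply: ltW.
have range x : - Dinf P1 P0 <= - loglr x <= - - Dinf P0 P1.
  by rewrite !lerN2 andbC; apply: loglr_range.
have := hoeffding_mgf_opt P1_ge0 P1_sum1 range mean_loglr1.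
by rewrite (_ : - - Dinf P0 P1 - - Dinf P1 P0 = DJinf P0 P1) // /DJinf; ring.
Qed.

Variables (n kstar : nat) (khat : {ffun 'I_n -> X} -> nat).
Hypotheses (kstar_range : (1 < kstar <= n)%N) (khat_range : forall D, (1 <= khat D <= n)%N).
Hypothesis khat_argmax : forall D (k : nat), (1 <= k <= n)%N ->
  llr P0 P1 D k <= llr P0 P1 D (khat D).

(* [prob_event P0 P1 kstar] is [prod_prob law] up to conversion. *)
Definition law (i : 'I_n) (x : X) : R := if (i.+1 < kstar)%N then P0 x else P1 x.

Lemma law_ge0 i x : 0 <= law i x.
Proof. by rewrite /law; case: ifP => _; apply: ltW. Qed.

Lemma law_sum1 i : \sum_x law i x = 1.
Proof. by rewrite /law; case: (i.+1 < kstar)%N. Qed.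

Lemma llr_split D (k1 k2 : nat) : (k1 <= k2)%N ->
  llr P0 P1 D k1 = \sum_(i < n | (k1.-1 <= i < k2.-1)%N) loglr (D i) + llr P0 P1 D k2.
Proof.
move=> k12; rewrite /llr (bigID (fun i : 'I_n => (k2 <= i.+1)%N)) /= addrC.
by congr (_ + _); apply: eq_bigl => i; apply/idP/idP => [/andP[? ?]|?]; rewrite ?andbT; lia.
Qed.

Lemma prob_khat_gt (alpha : nat) (t : R) : 0 <= t ->
  \sum_x P1 x * expR (t * - loglr x) <= 1 ->
  prob_event P0 P1 kstar [pred D | (kstar + alpha < khat D)%N] <=
  (\sum_x P1 x * expR (t * - loglr x)) ^+ alpha.+1.
Proof.
move=> t_ge0 rho_le1.
have P1_ge0 x : 0 <= P1 x by apply: ltW.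
apply: (prob_window_from P1_ge0 P1_sum1 rho_le1 law_ge0 law_sum1 (a := kstar.-1))
  => [i x ki|D /= far]; first by rewrite /law ifN //; lia.
have /andP[khat_ge1 khat_len] := khat_range D.
exists (khat D).-1; first by apply/andP; split; lia.
have kstar_valid : (1 <= kstar <= n)%N by lia.
have := khat_argmax D kstar_valid; rewrite (@llr_split D kstar (khat D)) ?gerDr; last by lia.
by rewrite -mulr_sumr sumrN mulrN oppr_ge0 => S_le0; apply: mulr_ge0_le0.
Qed.

Lemma prob_khat_lt (alpha : nat) (t : R) : 0 <= t ->
  \sum_x P0 x * expR (t * loglr x) <= 1 ->
  prob_event P0 P1 kstar [pred D | (khat D < kstar - alpha)%N] <=
  (\sum_x P0 x * expR (t * loglr x)) ^+ alpha.+1.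
Proof.
move=> t_ge0 rho_le1.
have P0_ge0 x : 0 <= P0 x by apply: ltW.
apply: (prob_window_to P0_ge0 P0_sum1 rho_le1 law_ge0 law_sum1 (b := kstar.-1))
  => [|i x ik|D /= far]; [lia | by rewrite /law ifT //; lia |].
have /andP[khat_ge1 khat_len] := khat_range D.
exists (khat D).-1; first by lia.
have kstar_valid : (1 <= kstar <= n)%N by lia.
have := khat_argmax D kstar_valid; rewrite (@llr_split D (khat D) kstar) ?lerDr; last by lia.
by rewrite -mulr_sumr => S_ge0; apply: mulr_ge0.
Qed.

Lemma prob_khat_far (alpha : nat) (t0 t1 r : R) : 0 <= t0 -> 0 <= t1 ->
  \sum_x P0 x * expR (t0 * loglr x) <= r -> \sum_x P1 x * expR (t1 * - loglr x) <= r ->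
  r <= 1 ->
  prob_event P0 P1 kstar
    [pred D | ~~ ((kstar - alpha <= khat D)%N && (khat D <= kstar + alpha)%N)]
  <= 2 * r ^+ alpha.+1.
Proof.
move=> t0_ge0 t1_ge0 rho0_le rho1_le r_le1.
have rho0_ge0 : 0 <= \sum_x P0 x * expR (t0 * loglr x).
  by apply: sumr_ge0 => x _; rewrite mulr_ge0 ?expR_ge0 ?ltW.
have rho1_ge0 : 0 <= \sum_x P1 x * expR (t1 * - loglr x).
  by apply: sumr_ge0 => x _; rewrite mulr_ge0 ?expR_ge0 ?ltW.
apply: le_trans (prod_prob_union law_ge0 (E1 := [pred D | (khat D < kstar - alpha)%N])
  (E2 := [pred D | (kstar + alpha < khat D)%N]) _) _.
  by move=> D; rewrite /= negb_and -!ltnNge.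
rewrite [2]/(1 + 1) mulrDl mul1r; apply: lerD.
  apply: le_trans (prob_khat_lt alpha t0_ge0 (le_trans rho0_le r_le1)) _.
  by rewrite lerXn2r // nnegrE (le_trans rho0_ge0).
apply: le_trans (prob_khat_gt alpha t1_ge0 (le_trans rho1_le r_le1)) _.
by rewrite lerXn2r // nnegrE (le_trans rho1_ge0).
Qed.

Lemma chernoff_coefE1 l :
  \sum_x P0 x `^ l * P1 x `^ (1 - l) = \sum_x P1 x * expR (l * - loglr x).
Proof.
apply: eq_bigr => x _.
have -> : P1 x * expR (l * - loglr x) = expR (ln (P1 x) + l * - loglr x).
  by rewrite expRD lnK // posrE.
rewrite /powR !gt_eqF // -expRD /loglr ln_div ?posrE //; congr expR; ring.
Qed.

Lemma chernoff_coefE0 l :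
  \sum_x P0 x `^ l * P1 x `^ (1 - l) = \sum_x P0 x * expR ((1 - l) * loglr x).
Proof.
apply: eq_bigr => x _.
have -> : P0 x * expR ((1 - l) * loglr x) = expR (ln (P0 x) + (1 - l) * loglr x).
  by rewrite expRD lnK // posrE.
rewrite /powR !gt_eqF // -expRD /loglr ln_div ?posrE //; congr expR; ring.
Qed.

Lemma chernoff_coef_le1 l : 0 <= l <= 1 -> \sum_x P0 x `^ l * P1 x `^ (1 - l) <= 1.
Proof.
move=> l01; apply: (@le_trans _ _ (\sum_x (l * P0 x + (1 - l) * P1 x))).
  by apply: ler_sum => x _; apply: weighted_amgm.
by rewrite big_split /= -!mulr_sumr P0_sum1 P1_sum1 !mulr1 addrC subrK.
Qed.

Lemma prob_khat_far_chernoff (alpha : nat) : (0 < alpha)%N ->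
  prob_event P0 P1 kstar
    [pred D | ~~ ((kstar - alpha <= khat D)%N && (khat D <= kstar + alpha)%N)]
  <= 2 * expR (- (alpha%:R * chernoff_info P0 P1)).
Proof.
move=> alpha_gt0; rewrite -ler_pdivrMl // /chernoff_info.
apply: le_expRN_sup; rewrite ?ltr0n //.
  exists (- ln (\sum_x P0 x `^ 2^-1 * P1 x `^ (1 - 2^-1))), 2^-1 => //.
  by rewrite /= in_itv /=; lra.
move=> e [l]; rewrite /= in_itv /= => /andP[l_gt0 l_lt1] <-.
have l01 : 0 <= l <= 1 by rewrite !ltW.
set rho := \sum_x _.
have rho_gt0 : 0 < rho.
  rewrite /rho chernoff_coefE1; apply: pmf_mean_gt0 => // x; [exact: ltW | exact: expR_gt0].
rewrite mulrN opprK expRM_natl lnK ?posrE // ler_pdivrMl //.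
apply: le_trans (prob_khat_far alpha (t0 := 1 - l) (t1 := l) _ _ _ _ (chernoff_coef_le1 l01)) _.
- by rewrite subr_ge0 ltW.
- exact: ltW.
- by rewrite /rho chernoff_coefE0.
- by rewrite /rho chernoff_coefE1.
by rewrite ler_pM2l // exprS ler_piMl ?exprn_ge0 ?(ltW rho_gt0) //; apply: chernoff_coef_le1.
Qed.

Lemma prob_khat_far_hoeffding (alpha : nat) :
  prob_event P0 P1 kstar
    [pred D | ~~ ((kstar - alpha <= khat D)%N && (khat D <= kstar + alpha)%N)]
  <= 2 * expR (- (alpha%:R * Num.min (KL P0 P1) (KL P1 P0) ^+ 2) / DJinf P0 P1 ^+ 2).
Proof.
set s := DJinf P0 P1; set C := Num.min _ _.
have KL0_ge0 := KL_ge0 P0_gt0 P1_gt0 P0_sum1 P1_sum1.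
have KL1_ge0 := KL_ge0 P1_gt0 P0_gt0 P1_sum1 P0_sum1.
have C_ge0 : 0 <= C by rewrite le_min KL0_ge0 KL1_ge0.
have s2_ge0 : 0 <= s ^+ 2 by rewrite sqr_ge0.
pose r := expR (- (2 * C ^+ 2) / s ^+ 2).
have le_r (K : R) : C <= K -> expR (- (2 * K ^+ 2) / s ^+ 2) <= r.
  move=> CK; rewrite ler_expR !mulNr lerN2 ler_wpM2r ?invr_ge0 // ler_pM2l //.
  by rewrite lerXn2r // nnegrE (le_trans C_ge0).
apply: le_trans (prob_khat_far alpha _ _ (le_trans hoeffding_loglr0 (le_r _ _))
  (le_trans hoeffding_loglr1 (le_r _ _)) _) _.
- exact: divr_ge0 (mulr_ge0 (ler0n _ 4) KL0_ge0) s2_ge0.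
- exact: divr_ge0 (mulr_ge0 (ler0n _ 4) KL1_ge0) s2_ge0.
- by rewrite ge_min lexx.
- by rewrite ge_min lexx orbT.
- rewrite /r expR_le1 mulNr oppr_le0.
  exact: divr_ge0 (mulr_ge0 (ler0n _ 2) (sqr_ge0 C)) s2_ge0.
rewrite -expRM_natl ler_pM2l // ler_expR.
rewrite (_ : _ * _ = - (2 * alpha.+1%:R) * (C ^+ 2 / s ^+ 2)); last by rewrite /r; ring.
rewrite (_ : - _ / _ = - alpha%:R * (C ^+ 2 / s ^+ 2)); last by ring.
apply: ler_wpM2r; first by rewrite divr_ge0 ?sqr_ge0.
by rewrite lerN2 -natr1; have := ler0n R alpha; lra.
Qed.

End ChangePoint.

Theorem theorem3p1 (R : realType) (X : finType) (P0 P1 : X -> R)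
  (P0pos : forall x, 0 < P0 x) (P1pos : forall x, 0 < P1 x)
  (P0sum : \sum_(x : X) P0 x = 1) (P1sum : \sum_(x : X) P1 x = 1)
  (n kstar alpha : nat) (hn : (1 < n)%N) (hk : (1 < kstar <= n)%N)
  (ha : (1 <= alpha <= n)%N)
  (khat : {ffun 'I_n -> X} -> nat)
  (khat_range : forall D, (1 <= khat D <= n)%N)
  (khat_argmax : forall D (k : nat), (1 <= k <= n)%N ->
      llr P0 P1 D k <= llr P0 P1 D (khat D)) :
  let s := DJinf P0 P1 in
  let C := Num.min (KL P0 P1) (KL P1 P0) in
  let istar : int := Num.ceil (ln ((n%:R - 1) / alpha%:R : R) / ln (2 : R)) in
  prob_event P0 P1 kstar
    [pred D | ~~ ((kstar - alpha <= khat D)%N && (khat D <= kstar + alpha)%N)]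
  <= 2 * Num.min
       (\sum_(1 <= i < (absz istar).+1 | (i%:Z <= istar))
          expR (- (2 ^+ i.-1 * alpha%:R * C ^+ 2) / s ^+ 2))
       (expR (- (alpha%:R * chernoff_info P0 P1))).
Proof.
cbv zeta; set s := DJinf P0 P1; set C := Num.min (KL P0 P1) (KL P1 P0).
set istar := Num.Def.ceil _.
have [alpha_large|alpha_small] := leqP n.-1 alpha.
  rewrite /prob_event big_pred0 => [|D]; last first.
    by apply/negbTE; rewrite negbK; have := khat_range D; lia.
  rewrite mulr_ge0 // le_min expR_ge0 andbT.
  by apply: sumr_ge0 => i _; apply: expR_ge0.
have alpha_gt0 : (0 < alpha)%N by case/andP: ha.
rewrite minr_pMr // le_min prob_khat_far_chernoff // andbT.
(* The first term of the sum alone already bounds the probability. *)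
apply: le_trans (prob_khat_far_hoeffding P0pos P1pos P0sum P1sum hk khat_range khat_argmax alpha) _.
rewrite ler_pM2l // -/s -/C.
have istar_gt0 : 0 < istar.
  have alpha_gt0' : 0 < alpha%:R :> R by rewrite ltr0n.
  rewrite /istar ceil_gt0 divr_gt0 // ln_gt0 //; last lra.
  rewrite ltr_pdivlMr // mul1r.
  have : alpha%:R + 1 < n%:R :> R by rewrite natr1 ltr_nat; lia.
  lra.
rewrite big_ltn_cond ?ifT ?absz_gt0 ?gt_eqF //; last by lia.
by rewrite /= expr0 mul1r lerDl; apply: sumr_ge0 => i _; apply: expR_ge0.
Qed.
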